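(* Let $k\geq2$. There exist constants $c,C>0$ and $r_0\geq 1$ depending only on $k$ such that the following holds. For $1\leq i\leq k$ let $B_i\subset\mathbb{R}$ be finite, let $g_i$ be a strictly monotone real function and $A_i=g_i(B_i)$. Let $r\geq r_0$ with $r^{1/(k-1)}\leq |B_i+B_i-B_i|$ for all $i$, and let $X_r=\{x\in A_1+\dots+A_k:\ r\leq r_{A_1+\dots+A_k}(x)<2r\}$. Then for each $x\in X_r$ there are at least $cr$ pairs $(P,P')$ of distinct points $P=(b_1,\dots,b_k)$, $P'=(b_1',\dots,b_k')$ in $B_1\times\dots\times B_k$ such that (1) $g_1(b_1)+\dots+g_k(b_k)=x=g_1(b_1')+\dots+g_k(b_k')$, and (2) $n_{B_i}(b_i,b_i')\leq C\,|B_i+B_i-B_i|/r^{1/(k-1)}$ for all $1\leq i\leq k$.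
   Context: $r_{A_1+\dots+A_k}(x)$ is the number of tuples $(a_1,\dots,a_k)\in A_1\times\dots\times A_k$ with $a_1+\dots+a_k=x$. $B+B-B=\{b_1+b_2-b_3:b_j\in B\}$. For $b,b'\in B$, $n_B(b,b')$ denotes the number of elements of $B+B-B$ lying in the interval $(\min(b,b'),\max(b,b')]$. Such pairs $(P,P')$ are called lucky pairs associated with $x$. *)

From HB Require Import structures.
From mathcomp Require Import all_boot all_order all_algebra finmap.
From mathcomp Require Import reals exp.
Set Implicit Arguments. Unset Strict Implicit. Unset Printing Implicit Defensive.
Import Order.TTheory GRing.Theory Num.Theory.
Local Open Scope fset_scope.
Local Open Scope ring_scope.

Section Defs.
Variable R : realType.

Definition sumdiff (B : {fset R}) : {fset R} :=
  [fset z - b | z in [fset b1 + b2 | b1 in B, b2 in B], b in B].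

Definition nB (B : {fset R}) (b b' : R) : nat :=
  #|` [fset y in sumdiff B | (Num.min b b' < y) && (y <= Num.max b b')]|.

Fixpoint tuples (ss : seq (seq R)) : seq (seq R) :=
  match ss with
  | [::] => [:: [::]]
  | s :: ss' => [seq a :: t | a <- s, t <- tuples ss']
  end.

Definition rep (k : nat) (A : 'I_k -> {fset R}) (x : R) : nat :=
  count (fun t => \sum_(a <- t) a == x)
        (tuples [seq enum_fset (A i) | i <- enum 'I_k]).

Definition in_sumset (k : nat) (A : 'I_k -> {fset R}) (x : R) : Prop :=
  exists a : 'I_k -> R, (forall i, a i \in A i) /\ \sum_i a i = x.

Definition strictly_monotone (g : R -> R) : Prop :=
  (forall x y, x < y -> g x < g y) \/ (forall x y, x < y -> g y < g x).

End Defs.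

From HB Require Import structures.
From mathcomp Require Import all_boot all_order all_algebra finmap.
From mathcomp Require Import reals exp.
From mathcomp Require Import lra.
Set Implicit Arguments. Unset Strict Implicit. Unset Printing Implicit Defensive.
Import Order.TTheory GRing.Theory Num.Theory.
Local Open Scope fset_scope.
Local Open Scope ring_scope.

(* Write N_i = |B_i + B_i - B_i| and L = r^(1/(k-1)).  Points are k-tuples
   P = (b_1, ..., b_k) in B_1 x ... x B_k with g_1(b_1) + ... + g_k(b_k) = x;
   there are at least r_{A_1+...+A_k}(x) >= r of them.  Cut the real line,
   for each i, into M+1 consecutive blocks each containing fewer than
   N_i/(M+1) + 1 elements of B_i + B_i - B_i (blocks are read off the rank
   function y |-> #{s in B_i+B_i-B_i | s <= y}), with M+1 about L/(4k).
   Orienting block indices along the direction of monotonicity of g_i, two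
   points can never have strictly larger oriented blocks in every
   coordinate, since their g-sums would then differ.  Hence the oriented block
   vectors of the points form an antichain in {0..M}^k, which has at most
   k(M+1)^(k-1) <= r/2 elements; so at least r/2 ordered pairs of distinct
   points share their block vector, and every such pair satisfies
   n_{B_i}(b_i, b_i') <= N_i/(M+1) <= 4k N_i / L. *)

Lemma tuples_mem (R : realType) (ss : seq (seq R)) (t : seq R) :
  t \in tuples ss -> size t = size ss /\
  forall j, (j < size ss)%N -> nth 0 t j \in nth [::] ss j.
Proof.
elim: ss t => [|s ss IH] t /=; first by rewrite inE => /eqP ->.
case/allpairsP => -[a t'] [/= ha ht' ->].
have [size_t' nth_t'] := IH _ ht'; split; first by rewrite /= size_t'.
by case=> [|j] //= hj; apply: nth_t'.
Qed.

Lemma tuples_uniq (R : realType) (ss : seq (seq R)) :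
  all uniq ss -> uniq (tuples ss).
Proof.
elim: ss => [|s ss IH] //= /andP [us uss].
by apply: allpairs_uniq => //; [exact: IH | move=> [a t] [b u] _ _ /= [-> ->]].
Qed.

Lemma card_bigcup_le (T I : finType) (s : seq I) (F : I -> {set T}) :
  (#|(\bigcup_(i <- s) F i)%SET| <= \sum_(i <- s) #|F i|)%N.
Proof.
elim: s => [|i s IH]; first by rewrite !big_nil cards0.
by rewrite !big_cons (leq_trans (leq_card_setU _ _)) // leq_add2l.
Qed.

Lemma card_ffun_coord_fixed (k n : nat) (i : 'I_k) (a : 'I_n) :
  #|[set w : {ffun 'I_k -> 'I_n} | w i == a]| = (n ^ k.-1)%N.
Proof.
pose F j := if j == i then (pred1 a : pred 'I_n) else predT.
have -> : #|[set w : {ffun 'I_k -> 'I_n} | w i == a]| = #|family F|.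
  apply: eq_card => w; rewrite inE; apply/eqP/familyP => [wi j|wF].
    rewrite /F; case: eqP => [->|] //; by rewrite inE wi.
  by have := wF i; rewrite /F eqxx => /eqP.
rewrite card_family foldrE big_map big_enum /= (bigD1 i) //= /F eqxx card1 mul1n.
rewrite (eq_bigr (fun _ => n)); last by move=> j /negbTE ->; rewrite card_ord.
by rewrite prod_nat_const cardC1 card_ord.
Qed.

(* An antichain of the grid {0..n}^k for the strict product order has at most
   k (n+1)^(k-1) elements: translating each vector down by its minimum entry is
   injective on the antichain and lands in the union of the hyperplanes w_i = 0. *)
Lemma card_antichain (k n : nat) (T : {set {ffun 'I_k -> 'I_n.+1}}) : (0 < k)%N ->
  {in T &, forall v w : {ffun 'I_k -> 'I_n.+1}, ~~ [forall i, (v i < w i)%N]} -> (#|T| <= k * n.+1 ^ k.-1)%N.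
Proof.
move=> k_gt0 T_anti; pose i0 := Ordinal k_gt0.
pose low (v : {ffun 'I_k -> 'I_n.+1}) := [arg min_(j < i0) v j].
have low_min (v : {ffun 'I_k -> 'I_n.+1}) j : (v (low v) <= v j)%N.
  by rewrite /low; case: arg_minnP => // m _; apply.
pose shift (v : {ffun 'I_k -> 'I_n.+1}) : {ffun 'I_k -> 'I_n.+1} :=
  [ffun i => Ordinal (leq_ltn_trans (leq_subr (v (low v)) (v i)) (ltn_ord (v i)))].
have shiftE (v : {ffun 'I_k -> 'I_n.+1}) i : shift v i = (v i - v (low v))%N :> nat by rewrite ffunE.
have shift_inj : {in T &, injective shift}.
  move=> v w vT wT /ffunP eq_vw.
  have eq_sum i : (v i + w (low w) = w i + v (low v))%N.
    have /(congr1 val) := eq_vw i; rewrite /= !shiftE => eq_i.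
    by rewrite -(subnK (low_min v i)) eq_i addnAC subnK.
  case: (ltngtP (v (low v)) (w (low w))) => [lt_vw|lt_wv|eq_low].
  - case/negP: (T_anti _ _ vT wT); apply/forallP => i.
    by rewrite -(ltn_add2r (w (low w))) eq_sum ltn_add2l.
  - case/negP: (T_anti _ _ wT vT); apply/forallP => i.
    by rewrite -(ltn_add2r (v (low v))) -eq_sum ltn_add2l.
  apply/ffunP => i; apply/val_inj/eqP.
  by rewrite -(eqn_add2r (w (low w))) eq_sum eq_low.
rewrite -(card_in_imset shift_inj).
have shift_zero : shift @: T \subset
    (\bigcup_(i <- enum 'I_k) [set w : {ffun 'I_k -> 'I_n.+1} | w i == ord0])%SET.
  apply/subsetP => _ /imsetP [v _ ->]; rewrite big_enum_cond.
  apply/bigcupP; exists (low v) => //.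
  by rewrite inE; apply/eqP/val_inj; rewrite /= shiftE subnn.
apply: leq_trans (subset_leq_card shift_zero) _.
apply: leq_trans (card_bigcup_le _ _) _.
rewrite big_enum /= (eq_bigr (fun=> n.+1 ^ k.-1)%N) => [|i _].
  by rewrite sum_nat_const card_ord.
exact: card_ffun_coord_fixed.
Qed.

(* A finite set S is no larger than the number of ordered pairs of distinct
   elements of S identified by h, plus the size of the image h(S): the elements
   that share their h-value with another one are first projections of such
   pairs, and h is injective on the others. *)
Lemma card_le_collisions (T C : finType) (S : {set T}) (h : T -> C) :
  (#|S| <= #|[set pq : T * T | [&& pq.1 \in S, pq.2 \in S, pq.1 != pq.2 &
                                  h pq.1 == h pq.2]]| + #|h @: S|)%N.
Proof.
set Coll := [set pq : T * T | _].
pose Lone := [set p in S | [forall q, (q \in S) ==> (q != p) ==> (h q != h p)]].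
have Lone_sub : Lone \subset S by apply/subsetP => p; rewrite inE => /andP [].
rewrite -(cardsID Lone S) (setIidPr Lone_sub) addnC leq_add //.
  have paired : S :\: Lone \subset fst @: Coll.
    apply/subsetP => p; rewrite !inE => /andP [+ pS]; rewrite pS /= negb_forall.
    case/existsP => q; rewrite negb_imply => /andP [qS]; rewrite negb_imply negbK.
    move=> /andP [qp /eqP hqp].
    by apply/imsetP; exists (p, q); rewrite // inE /= pS qS eq_sym qp hqp eqxx.
  exact: leq_trans (subset_leq_card paired) (leq_imset_card _ _).
have h_inj : {in Lone &, injective h}.
  move=> p q; rewrite !inE => /andP [_ /forallP lone_p] /andP [qS _] hpq.
  apply/eqP; apply: contraT => pq; have := lone_p q.
  by rewrite qS eq_sym pq hpq eqxx.
by rewrite -(card_in_imset h_inj) subset_leq_card // imsetS.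
Qed.

Section Rank.
Variable R : realType.
Implicit Types (S : {fset R}) (y : R).

Definition rank S y : nat := #|` [fset s in S | s <= y]|.

Lemma rank_le_card S y : (rank S y <= #|` S|)%N.
Proof. exact/fsubset_leq_card/fset_sub. Qed.

Lemma rank_mono S : {homo rank S : y y' / y <= y' >-> (y <= y')%N}.
Proof.
move=> y y' le_yy'; apply/fsubset_leq_card/fsubsetP => s; rewrite !inE.
by case/andP => -> /le_trans ->.
Qed.

Lemma card_interval_rank S b b' : b <= b' ->
  #|` [fset y in S | (b < y) && (y <= b')]| = (rank S b' - rank S b)%N.
Proof.
move=> le_bb'; rewrite /rank -(cardfsID [fset s in S | s <= b] [fset s in S | s <= b']).
have -> : [fset s in S | s <= b'] `&` [fset s in S | s <= b] = [fset s in S | s <= b].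
  apply/fsetP => y; rewrite !inE; case: (y \in S) => //=.
  by rewrite andb_idl // => le_yb; exact: le_trans le_yb le_bb'.
rewrite addKn; congr #|` _ |; apply/fsetP => y; rewrite !inE.
by case: (y \in S); rewrite //= -ltNge.
Qed.

Lemma card_interval_same_block S b b' m : (0 < m)%N ->
  (rank S b %/ m = rank S b' %/ m)%N ->
  (#|` [fset y in S | (Num.min b b' < y)%R && (y <= Num.max b b')%R]| < m)%N.
Proof.
move=> m_gt0; wlog le_bb' : b b' / b <= b'.
  move=> W; case/orP: (le_total b b') => [|le_b'b]; first exact: W.
  by rewrite minC maxC => same; apply: W.
rewrite min_l // max_r // card_interval_rank // => same.
rewrite ltn_subLR; last exact: rank_mono.
rewrite {1}(divn_eq (rank S b') m) -same {2}(divn_eq (rank S b) m).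
by rewrite -addnA ltn_add2l ltn_addl // ltn_pmod.
Qed.

End Rank.

Lemma strictly_monotone_dir (R : realType) (g : R -> R) : strictly_monotone g ->
  forall a b, a < b -> if g 0 < g 1 then g a < g b else g b < g a.
Proof.
case=> g_mono a b lt_ab; have := g_mono _ _ ltr01.
  by move=> ->; exact: g_mono.
by move=> lt10; rewrite ltNge (ltW lt10); exact: g_mono.
Qed.

Lemma powR_invnK (R : realType) (r : R) (j : nat) : 0 <= r -> (0 < j)%N ->
  (r `^ j%:R^-1) ^+ j = r.
Proof.
move=> r_ge0 j_gt0; rewrite -powR_mulrn ?powR_ge0 // -powRrM mulVf ?powRr1 //.
by rewrite pnatr_eq0 -lt0n.
Qed.

(* Choice of the number M+1 of blocks: about L/(4k), small enough for the
   antichain bound to be at most L^(k-1)/2, large enough for blocks to be short. *)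
Lemma choose_block_number (R : realType) (k : nat) (L : R) :
  (2 <= k)%N -> 4 * k%:R <= L ->
  exists M : nat, 2 * (k * M.+1 ^ k.-1)%:R <= L ^+ k.-1 /\ L <= 4 * k%:R * M.+1%:R.
Proof.
move=> k_ge2 C_le_L; have k_ge2R : 2 <= k%:R :> R by rewrite ler_nat.
have C_gt0 : 0 < 4 * k%:R :> R by lra.
set M := Num.truncn (L / (4 * k%:R)); exists M.
have L_lt : L < 4 * k%:R * M.+1%:R.
  by rewrite mulrC -ltr_pdivrMr // truncnS_gt.
have two_kq_le_L : 2 * k%:R * M.+1%:R <= L.
  have y_ge1 : 1 <= L / (4 * k%:R) by rewrite ler_pdivlMr // mul1r.
  have M_le : M%:R <= L / (4 * k%:R) by rewrite truncn_le (le_trans ler01).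
  rewrite -natr1 -[L](divfK (lt0r_neq0 C_gt0)) in L_lt *.
  move: M_le y_ge1; set y := L / _ => M_le y_ge1; nra.
split; last exact: ltW.
have j_gt0 : (0 < k.-1)%N by rewrite -ltnS prednK // ltnW.
have kq_ge0 : 0 <= 2 * k%:R * M.+1%:R :> R by rewrite !mulr_ge0.
have pow_le : (2 * k%:R * M.+1%:R) ^+ k.-1 <= L ^+ k.-1.
  by rewrite lerXn2r ?nnegrE // (le_trans kq_ge0).
apply: le_trans pow_le.
rewrite exprMn natrM natrX mulrA ler_wpM2r ?exprn_ge0 //.
by apply: ler_eXnr j_gt0 _; lra.
Qed.

Lemma divn_le_ratio (R : realType) (n q : nat) (C L : R) :
  0 < L -> L <= C * q.+1%:R -> (n %/ q.+1)%:R <= C * n%:R / L.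
Proof.
move=> L_gt0 L_le; rewrite ler_pdivlMr //.
have div_le : (n %/ q.+1)%:R * q.+1%:R <= n%:R :> R.
  by rewrite -natrM ler_nat leq_divM.
have : 0 <= (n %/ q.+1)%:R :> R by [].
have : 0 < C by rewrite -(pmulr_lgt0 _ (ltr0Sn R q)) (lt_le_trans L_gt0).
nra.
Qed.

Section LuckyPairs.
Variables (R : realType) (k : nat) (B : 'I_k -> {fset R}) (g : 'I_k -> R -> R).
Variables (x : R) (M : nat).

(* A common finite carrier for all coordinates, so that points form a finType. *)
Definition support : {fset R} := \bigcup_(i <- enum 'I_k) B i.

(* Candidate points: coordinates in the carrier (b_i in B_i is imposed by [solutions]). *)
Definition point := {ffun 'I_k -> support}.

Definition coords (P : point) : {ffun 'I_k -> R} := [ffun i => val (P i)].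

Lemma coords_inj : injective coords.
Proof.
move=> P P' /ffunP same; apply/ffunP => i; apply/val_inj.
by have := same i; rewrite !ffunE.
Qed.

Definition solutions : {set point} :=
  [set P : point | [forall i, val (P i) \in B i] && (\sum_i g i (val (P i)) == x)].

Lemma rep_le_solutions : (rep (fun i => [fset g i b | b in B i]) x <= #|solutions|)%N.
Proof.
set A := fun i => _; rewrite /rep -size_filter cardE.
pose values (P : point) := [seq g i (val (P i)) | i <- enum 'I_k].
rewrite -(size_map values); apply: uniq_leq_size.
  apply/filter_uniq/tuples_uniq/allP => _ /mapP [i _ ->]; exact: fset_uniq.
move=> t; rewrite mem_filter => /andP [/eqP sum_t /tuples_mem [size_t mem_t]].
rewrite size_map size_enum_ord in size_t mem_t.
have nth_t (i : 'I_k) : nth 0 t i \in A i.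
  by have := mem_t i (ltn_ord i); rewrite (nth_map i) ?size_enum_ord ?nth_ord_enum.
have lift (i : 'I_k) : exists b : support, val b \in B i /\ g i (val b) = nth 0 t i.
  have /imfsetP [b bB ->] := nth_t i.
  have b_supp : b \in support by apply/bigfcupP; exists i; rewrite ?mem_enum.
  by exists [` b_supp].
have [P P_lift] := fin_all_exists lift.
have t_values : t = values [ffun i => P i].
  apply: (@eq_from_nth _ 0); first by rewrite size_map size_enum_ord.
  move=> j; rewrite size_t => lt_jk; pose i := Ordinal lt_jk.
  rewrite -[j]/(nat_of_ord i) (nth_map i) ?size_enum_ord // nth_ord_enum ffunE.
  by case: (P_lift i).
apply/mapP; exists [ffun i => P i] => //; rewrite mem_enum inE.
apply/andP; split; first by apply/forallP => i; rewrite ffunE; case: (P_lift i).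
rewrite -sum_t t_values big_map big_enum /=; apply/eqP/eq_bigr => i _.
by rewrite ffunE.
Qed.

Definition block_len (i : 'I_k) : nat := (#|` sumdiff (B i)| %/ M.+1).+1.

Definition block (i : 'I_k) (y : R) : nat := rank (sumdiff (B i)) y %/ block_len i.

Lemma block_le i y : (block i y <= M)%N.
Proof.
rewrite -ltnS ltn_divLR // mulnC.
exact: leq_ltn_trans (rank_le_card _ _) (ltn_ceil _ _).
Qed.

Lemma block_lt i y y' : (block i y < block i y')%N -> y < y'.
Proof.
by apply: contraTT; rewrite -leNgt -leqNgt => /(rank_mono (sumdiff (B i))); exact: leq_div2r.
Qed.

Definition oriented_block (P : point) : {ffun 'I_k -> 'I_M.+1} :=
  [ffun i => inord (if g i 0 < g i 1 then block i (val (P i))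
                    else (M - block i (val (P i)))%N)].

Lemma oriented_blockE P i : oriented_block P i =
  (if g i 0 < g i 1 then block i (val (P i)) else (M - block i (val (P i)))%N) :> nat.
Proof. by rewrite ffunE inordK // ltnS; case: ifP => _; rewrite ?block_le ?leq_subr. Qed.

Lemma same_oriented_block P P' i : oriented_block P = oriented_block P' ->
  block i (val (P i)) = block i (val (P' i)).
Proof.
move=> /ffunP/(_ i)/(congr1 val); rewrite /= !oriented_blockE.
by case: ifP => // _ /eqP; rewrite eqn_sub2lE ?block_le // => /eqP.
Qed.

Hypothesis g_mono : forall i, strictly_monotone (g i).

Lemma oriented_block_lt P P' i : (oriented_block P i < oriented_block P' i)%N ->
  g i (val (P i)) < g i (val (P' i)).
Proof.
rewrite !oriented_blockE; have := strictly_monotone_dir (g_mono i).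
case: ifP => _ g_dir lt_blocks; apply: g_dir; apply: (@block_lt i); first exact: lt_blocks.
by rewrite -(ltn_sub2lE _ (block_le _ _)).
Qed.

(* Two solutions have the same g-sum, so their oriented block vectors are never
   strictly ordered in every coordinate. *)
Lemma oriented_blocks_antichain : (0 < k)%N ->
  {in oriented_block @: solutions &,
    forall v w : {ffun 'I_k -> 'I_M.+1}, ~~ [forall i, (v i < w i)%N]}.
Proof.
move=> k_gt0 _ _ /imsetP [P + ->] /imsetP [P' + ->].
rewrite !inE => /andP [_ /eqP sum_P] /andP [_ /eqP sum_P'].
apply/negP => /forallP all_lt.
have : \sum_i g i (val (P i)) < \sum_i g i (val (P' i)).
  apply: ltr_sum => [|i _]; last exact: oriented_block_lt.
  by apply/hasP; exists (Ordinal k_gt0); rewrite ?mem_index_enum.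
by rewrite sum_P sum_P' ltxx.
Qed.

Definition collisions : {set point * point} :=
  [set pq | [&& pq.1 \in solutions, pq.2 \in solutions, pq.1 != pq.2 &
                oriented_block pq.1 == oriented_block pq.2]].

Lemma card_collisions : (0 < k)%N ->
  (#|solutions| <= #|collisions| + k * M.+1 ^ k.-1)%N.
Proof.
move=> k_gt0; apply: leq_trans (card_le_collisions solutions oriented_block) _.
by rewrite leq_add2l card_antichain //; exact: oriented_blocks_antichain.
Qed.

Lemma collisionP pq : pq \in collisions ->
  [/\ coords pq.1 != coords pq.2,
      forall i, coords pq.1 i \in B i /\ coords pq.2 i \in B i,
      \sum_i g i (coords pq.1 i) = x /\ \sum_i g i (coords pq.2 i) = x &
      forall i, (nB (B i) (coords pq.1 i) (coords pq.2 i)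
                 <= #|` sumdiff (B i)| %/ M.+1)%N].
Proof.
case: pq => P P'; rewrite !inE /= => /and4P [+ + neq_PP' /eqP same_block].
move=> /andP [/forallP P_B /eqP sum_P] /andP [/forallP P'_B /eqP sum_P'].
split.
- by rewrite (inj_eq coords_inj).
- by move=> i; rewrite !ffunE P_B P'_B.
- by split; [rewrite -sum_P | rewrite -sum_P']; apply: eq_bigr => i _; rewrite ffunE.
- move=> i; rewrite !ffunE -ltnS.
  exact: card_interval_same_block (same_oriented_block i same_block).
Qed.
End LuckyPairs.

Theorem proposition3p2 (R : realType) (k : nat) (hk : (2 <= k)%N) :
  exists (c C r0 : R), 0 < c /\ 0 < C /\ 1 <= r0 /\
  forall (B : 'I_k -> {fset R}) (g : 'I_k -> R -> R) (r : R),
    (forall i, strictly_monotone (g i)) ->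
    let A := fun i => [fset g i b | b in B i] in
    r0 <= r ->
    (forall i, r `^ (k.-1%:R)^-1 <= (#|` sumdiff (B i)|)%:R) ->
    forall x : R,
      in_sumset A x -> r <= (rep A x)%:R < 2 * r ->
      exists s : seq ({ffun 'I_k -> R} * {ffun 'I_k -> R}),
        [/\ uniq s, c * r <= (size s)%:R &
          forall PP, PP \in s ->
            [/\ PP.1 != PP.2,
                forall i, PP.1 i \in B i /\ PP.2 i \in B i,
                \sum_i g i (PP.1 i) = x /\ \sum_i g i (PP.2 i) = x &
                forall i, (nB (B i) (PP.1 i) (PP.2 i))%:R
                          <= C * (#|` sumdiff (B i)|)%:R / r `^ (k.-1%:R)^-1]].
Proof.
have k_gt0 : (0 < k)%N by apply: leq_trans hk.
have j_gt0 : (0 < k.-1)%N by rewrite -ltnS prednK.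
pose C : R := 4 * k%:R; have C_gt0 : 0 < C by rewrite mulr_gt0 // ltr0n.
exists 2^-1, C, (C ^+ k.-1); split; first by rewrite invr_gt0.
split=> //; split.
  by rewrite exprn_ege1 // (le_trans _ (ler_peMr _ _)) ?ler1n // ltW.
move=> B g r g_mono A C_le_r _ x _ /andP [r_le_rep _].
set L := r `^ k.-1%:R^-1.
have r_ge0 : 0 <= r by apply: le_trans C_le_r; rewrite exprn_ge0 // ltW.
have L_pow : L ^+ k.-1 = r by apply: powR_invnK.
have C_le_L : C <= L.
  by rewrite -(ler_pXn2r j_gt0) ?nnegrE ?powR_ge0 ?(ltW C_gt0) // L_pow.
have [M [M_count L_le]] := choose_block_number hk C_le_L.
exists [seq (coords pq.1, coords pq.2) | pq <- enum (collisions B g x M)]; split.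
- rewrite map_inj_uniq ?enum_uniq // => -[P1 P2] [P3 P4] /=.
  by case=> /coords_inj -> /coords_inj ->.
- rewrite size_map -cardE.
  have := leq_trans (rep_le_solutions B g x) (card_collisions B x M g_mono k_gt0).
  rewrite -(ler_nat R) natrD -/(rep A x) => rep_le; rewrite L_pow in M_count; lra.
- move=> PP /mapP [pq]; rewrite mem_enum => /collisionP [neq_pq inB sums nB_le] ->.
  split => // i; apply: le_trans (divn_le_ratio _ (lt_le_trans C_gt0 C_le_L) L_le).
  by rewrite ler_nat.
Qed.
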